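(* Let $K$ be a field of characteristic different from $2$ and $3$, let $L$ be a perfect Lie algebra, $A$ an associative commutative algebra with unit, with at least one of $L$, $A$ finite-dimensional, $D$ a Lie subalgebra of $\operatorname{Der}(A)$, $\langle\cdot,\cdot\rangle$ a nonzero symmetric bilinear invariant form on $L$, and $\xi$ a nonzero element of $HC^1(A)$. Consider the Lie algebra $(L\otimes A)\oplus Kz\oplus D$ with brackets $[x\otimes a,y\otimes b]=[x,y]\otimes ab+\langle x,y\rangle\xi(a,b)z$, $[d,x\otimes a]=x\otimes d(a)$, the bracket of $D$, and $z$ central ($x,y\in L$, $a,b\in A$, $d\in D$), assuming these brackets define a Lie algebra. Then $Z^2_{comm}((L\otimes A)\oplus Kz\oplus D)\cong Z^2_{comm}((L\otimes A)\oplus D)$, where $(L\otimes A)\oplus D$ carries the brackets $[x\otimes a,y\otimes b]=[x,y]\otimes ab$, $[d,x\otimes a]=x\otimes d(a)$ and the bracket of $D$.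
   Context: $Z^2_{comm}(\mathfrak L)$ is the space of symmetric bilinear forms $\varphi$ on a Lie algebra $\mathfrak L$ with $\varphi([x,y],z)+\varphi([z,x],y)+\varphi([y,z],x)=0$ for all $x,y,z$. $HC^1(A)$ is the space of skew-symmetric bilinear forms $\alpha$ on $A$ with $\alpha(ab,c)+\alpha(ca,b)+\alpha(bc,a)=0$ for all $a,b,c\in A$. A bilinear form $\langle\cdot,\cdot\rangle$ on $L$ is invariant if $\langle[x,y],w\rangle=\langle x,[y,w]\rangle$ for all $x,y,w\in L$. *)

From HB Require Import structures.
From mathcomp Require Import all_boot all_order all_algebra.
Set Implicit Arguments. Unset Strict Implicit. Unset Printing Implicit Defensive.
Import Order.TTheory GRing.Theory Num.Theory.
Local Open Scope ring_scope.

Section Defs.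
Variable K : fieldType.

Definition lin (V W : lmodType K) (f : V -> W) : Prop :=
  forall (c : K) (u v : V), f (c *: u + v) = c *: f u + f v.
Definition bilin (U V W : lmodType K) (f : U -> V -> W) : Prop :=
  (forall u, lin (f u)) /\ (forall v, lin (fun u => f u v)).
Definition linK (V : lmodType K) (f : V -> K) : Prop :=
  forall (c : K) (u v : V), f (c *: u + v) = c * f u + f v.
Definition bilinK (U V : lmodType K) (f : U -> V -> K) : Prop :=
  (forall u, linK (f u)) /\ (forall v, linK (fun u => f u v)).

Definition fin_dim (V : lmodType K) : Prop :=
  exists s : seq V, forall v : V, exists c : nat -> K,
    v = \sum_(i < size s) c i *: s`_i.

Definition is_lie (V : lmodType K) (br : V -> V -> V) : Prop :=
  bilin br /\ (forall x, br x x = 0) /\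
  (forall x y z, br x (br y z) + br y (br z x) + br z (br x y) = 0).

Definition perfect (V : lmodType K) (br : V -> V -> V) : Prop :=
  forall x : V, exists s : seq (V * V), x = \sum_(p <- s) br p.1 p.2.

Definition invariant_form (V : lmodType K) (br : V -> V -> V) (f : V -> V -> K) :=
  forall x y w, f (br x y) w = f x (br y w).

Definition is_derivation (A : comAlgType K) (d : A -> A) : Prop :=
  lin d /\ forall a b : A, d (a * b) = d a * b + a * d b.

(* D (with bracket brD) is a Lie subalgebra of Der(A): rho identifies D
   injectively and linearly with a space of derivations of A, the bracket of D
   being the commutator of derivations. *)
Definition lie_subalg_Der (A : comAlgType K) (D : lmodType K)
    (brD : D -> D -> D) (rho : D -> A -> A) : Prop :=
  (forall (c : K) (d e : D) (a : A), rho (c *: d + e) a = c *: rho d a + rho e a) /\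
  injective rho /\
  (forall d, is_derivation (rho d)) /\
  (forall d e a, rho (brD d e) a = rho d (rho e a) - rho e (rho d a)).

Definition HC1 (A : comAlgType K) (al : A -> A -> K) : Prop :=
  bilinK al /\ (forall a b, al a b = - al b a) /\
  (forall a b c, al (a * b) c + al (c * a) b + al (b * c) a = 0).

Definition Z2comm (V : lmodType K) (br : V -> V -> V) (phi : V -> V -> K) : Prop :=
  bilinK phi /\ (forall x y, phi x y = phi y x) /\
  (forall x y z, phi (br x y) z + phi (br z x) y + phi (br y z) x = 0).

Definition is_tensor (L A T : lmodType K) (tens : L -> A -> T) : Prop :=
  bilin tens /\
  forall (W : lmodType K) (f : L -> A -> W), bilin f ->
    exists! g : T -> W, lin g /\ forall x a, g (tens x a) = f x a.

Definition subspace_iso (V W : Type) (P : (V -> V -> K) -> Prop)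
    (Q : (W -> W -> K) -> Prop) : Prop :=
  exists F : (V -> V -> K) -> (W -> W -> K),
    (forall phi, P phi -> Q (F phi)) /\
    (forall c phi psi, P phi -> P psi ->
       F (fun u v => c * phi u v + psi u v) = (fun u v => c * F phi u v + F psi u v)) /\
    (forall phi psi, P phi -> P psi -> F phi = F psi -> phi = psi) /\
    (forall chi, Q chi -> exists2 phi, P phi & F phi = chi).

(* The bracket on (L (x) A) + Kz + D, with elements written ((t, c), d),
   z = ((0,1),0). *)
Definition ext_bracket (L : lmodType K) (A : comAlgType K) (D T : lmodType K)
    (brL : L -> L -> L) (form : L -> L -> K) (xi : A -> A -> K)
    (brD : D -> D -> D) (rho : D -> A -> A) (tens : L -> A -> T)
    (br : (T * K^o * D)%type -> (T * K^o * D)%type -> (T * K^o * D)%type) : Prop :=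
  bilin br /\
  (forall x y a b, br ((tens x a, 0), 0) ((tens y b, 0), 0)
                   = ((tens (brL x y) (a * b), form x y * xi a b), 0)) /\
  (forall d x a, br ((0, 0), d) ((tens x a, 0), 0) = ((tens x (rho d a), 0), 0)) /\
  (forall d x a, br ((tens x a, 0), 0) ((0, 0), d) = - ((tens x (rho d a), 0), 0)) /\
  (forall d e, br ((0, 0), d) ((0, 0), e) = ((0, 0), brD d e)) /\
  (forall g, br ((0, 1), 0) g = 0 /\ br g ((0, 1), 0) = 0).

Definition plain_bracket (L : lmodType K) (A : comAlgType K) (D T : lmodType K)
    (brL : L -> L -> L) (brD : D -> D -> D) (rho : D -> A -> A)
    (tens : L -> A -> T) (br : (T * D)%type -> (T * D)%type -> (T * D)%type) : Prop :=
  bilin br /\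
  (forall x y a b, br (tens x a, 0) (tens y b, 0) = (tens (brL x y) (a * b), 0)) /\
  (forall d x a, br (0, d) (tens x a, 0) = (tens x (rho d a), 0)) /\
  (forall d x a, br (tens x a, 0) (0, d) = - (tens x (rho d a), 0)) /\
  (forall d e, br (0, d) (0, e) = (0, brD d e)).

End Defs.

From HB Require Import structures.
From mathcomp Require Import all_boot all_order all_algebra.
From mathcomp Require Import ring.
From Stdlib Require Import FunctionalExtensionality.
Import GRing.Theory.
Local Open Scope ring_scope.
Set Implicit Arguments. Unset Strict Implicit. Unset Printing Implicit Defensive.

(* Every commutative 2-cocycle [phi] of the extended algebra vanishes as soon as
   one argument is the central element [z]; hence [phi] factors through the
   quotient by [Kz], which is [(L (x) A) + D] with the plain bracket, and
   restricting along the obvious section is the isomorphism.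
   - [phi (t, z) = 0]: cocycle identity on [(x (x) a, y (x) 1, z)], as
     [xi (a, 1) = 0], and [L = [L, L]].
   - [phi (z, z) = 0]: cocycle identity on [(x (x) a, y (x) b, z)] with
     [<x, y> xi (a, b) <> 0].
   - [phi (z, d) = 0]: the cocycle identity on [(x (x) a, y (x) b, d)] gives
     [<x, y> xi (a, b) phi (z, d) = 2 N (x, y)] for a form [N] satisfying the
     cocycle identity on [L]; summing cyclically over [([x, y], w)] and using
     invariance gives [3 <[x, y], w> xi (a, b) phi (z, d) = 0].
   The form [N] exists because [phi (x (x) a, y (x) b)] depends only on [a b]. *)

Section Basics.
Variable K : fieldType.
Implicit Types V W : lmodType K.

Lemma linD V W (f : V -> W) : lin f -> forall u v, f (u + v) = f u + f v.
Proof. by move=> h u v; rewrite -[u in LHS]scale1r h scale1r. Qed.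

Lemma lin0 V W (f : V -> W) : lin f -> f 0 = 0.
Proof. by move=> h; apply: (addrI (f 0)); rewrite addr0 -linD // addr0. Qed.

Lemma linZ V W (f : V -> W) : lin f -> forall c u, f (c *: u) = c *: f u.
Proof. by move=> h c u; rewrite -[c *: u]addr0 h lin0 // addr0. Qed.

Lemma linN V W (f : V -> W) : lin f -> forall u, f (- u) = - f u.
Proof. by move=> h u; rewrite -scaleN1r linZ // scaleN1r. Qed.

Lemma linB V W (f : V -> W) : lin f -> forall u v, f (u - v) = f u - f v.
Proof. by move=> h u v; rewrite linD // linN. Qed.

Lemma lin_sum V W (f : V -> W) (I : Type) (s : seq I) (F : I -> V) :
  lin f -> f (\sum_(i <- s) F i) = \sum_(i <- s) f (F i).
Proof.
move=> h; elim: s => [|i s IH]; first by rewrite !big_nil lin0.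
by rewrite !big_cons linD // IH.
Qed.

Lemma lin_comp (U : lmodType K) V W (f : V -> W) (g : U -> V) :
  lin f -> lin g -> lin (fun u => f (g u)).
Proof. by move=> hf hg c u v; rewrite hg hf. Qed.

Lemma lin_sub V W (f g : V -> W) : lin f -> lin g -> lin (fun v => f v - g v).
Proof. by move=> hf hg c u v; rewrite hf hg opprD addrACA scalerBr. Qed.

Lemma lin_cst0 V W : lin (fun _ : V => (0 : W)).
Proof. by move=> c u v; rewrite scaler0 addr0. Qed.

Lemma linK_lin V (f : V -> K) : linK f -> lin (f : V -> K^o).
Proof. by move=> h c u v; rewrite h. Qed.

Lemma tensor_ext (L A T : lmodType K) (tens : L -> A -> T) W (g1 g2 : T -> W) :
  is_tensor tens -> lin g1 -> lin g2 ->
  (forall x a, g1 (tens x a) = g2 (tens x a)) -> forall t, g1 t = g2 t.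
Proof.
move=> [[tens_r tens_l] univ] h1 h2 e t.
have g1_bil : bilin (fun x a => g1 (tens x a)).
  by split=> [x|a]; [exact: lin_comp h1 (tens_r x) | exact: lin_comp h1 (tens_l a)].
have [g [_ g_uniq]] := univ W _ g1_bil.
have <- := g_uniq g1 (conj h1 (fun x a => erefl)).
by have <- := g_uniq g2 (conj h2 (fun x a => esym (e x a))).
Qed.

Lemma HC1_1r (A : comAlgType K) (xi : A -> A -> K) : HC1 xi -> forall a, xi a 1 = 0.
Proof.
case=> _ [xi_skew xi_cyc] a; have := xi_cyc a 1 1.
by rewrite !mulr1 mul1r (xi_skew 1 a) addrK.
Qed.

Lemma derivation1 (A : comAlgType K) (d : A -> A) : is_derivation d -> d 1 = 0.
Proof.
case=> _ leibniz; have := leibniz 1 1; rewrite !mulr1 mul1r => h.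
by apply: (addrI (d 1)); rewrite addr0 -h.
Qed.

End Basics.

Section PerfectLie.
Variable K : fieldType.
Variables (L : lmodType K) (brL : L -> L -> L).
Hypothesis hperf : perfect brL.

Lemma perfect_lin_eq0 (W : lmodType K) (f : L -> W) :
  lin f -> (forall x y, f (brL x y) = 0) -> forall x, f x = 0.
Proof.
move=> hf f_br x; have [s ->] := hperf x.
by rewrite (lin_sum _ _ hf) big1.
Qed.

Hypothesis hL : is_lie brL.

Lemma lie_linl y : lin (brL^~ y). Proof. by case: hL => [[_ ?] _]. Qed.
Lemma lie_linr x : lin (brL x). Proof. by case: hL => [[? _] _]. Qed.

Lemma lie_anti x y : brL x y = - brL y x.
Proof.
have [_ [alt _]] := hL; have := alt (x + y).
rewrite (linD (lie_linl _)) !(linD (lie_linr _)) !alt add0r addr0 => /eqP.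
by rewrite addr_eq0 => /eqP.
Qed.

Lemma lie_jacobi w u x : brL (brL w u) x = brL w (brL u x) - brL u (brL w x).
Proof.
have [_ [_ jac]] := hL; have := jac x w u.
rewrite (lie_anti x w) (linN (lie_linr u)) (lie_anti (brL w u) x) => /eqP.
by rewrite -addrA addr_eq0 => /eqP ->; rewrite opprK.
Qed.

Hypothesis two_neq0 : (2%:R : K) != 0.

(* [p ([[w,u],x], y)] equals [p (x, [[w,u],y])] by ad-symmetry for [[w,u]], and
   its opposite by expanding [ad [w,u]] with Jacobi. *)
Lemma adsym_form_eq0 (p : L -> L -> K^o) :
  (forall y, lin (p^~ y)) -> (forall x, lin (p x)) ->
  (forall w x y, p (brL w x) y = p x (brL w y)) -> forall x y, p x y = 0.
Proof.
move=> pl pr p_ad.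
have p_brbr x w u y : p x (brL (brL w u) y) = 0.
  have e : p x (brL (brL w u) y) = - p x (brL (brL w u) y).
    rewrite -{1}p_ad lie_jacobi (linB (pl _)) !p_ad.
    by rewrite -(linB (pr _)) -opprB (linN (pr _)) -lie_jacobi.
  have : 2%:R * p x (brL (brL w u) y) = 0 by rewrite mulr2n mulrDl mul1r {1}e addNr.
  by move/eqP; rewrite mulf_eq0 (negbTE two_neq0) => /eqP.
move=> x; apply: perfect_lin_eq0 (pr x) _ => v y.
exact: perfect_lin_eq0 (lin_comp (pr x) (lie_linl y)) (fun w u => p_brbr x w u y) v.
Qed.

End PerfectLie.

Section CentralExtension.
Variable K : fieldType.
Hypothesis hchar2 : 2%N \notin [pchar K].
Hypothesis hchar3 : 3%N \notin [pchar K].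
Variables (L : lmodType K) (brL : L -> L -> L).
Hypothesis hL : is_lie brL.
Hypothesis hperf : perfect brL.
Variable A : comAlgType K.
Variables (D : lmodType K) (brD : D -> D -> D) (rho : D -> A -> A).
Hypothesis hD : lie_subalg_Der brD rho.
Variable form : L -> L -> K.
Hypothesis hform_bil : bilinK form.
Hypothesis hform_sym : forall x y, form x y = form y x.
Hypothesis hform_inv : invariant_form brL form.
Hypothesis hform0 : exists x y, form x y != 0.
Variable xi : A -> A -> K.
Hypothesis hxi : HC1 xi.
Hypothesis hxi0 : exists a b, xi a b != 0.
Variables (T : lmodType K) (tens : L -> A -> T).
Hypothesis hT : is_tensor tens.
Variable br1 : (T * K^o * D)%type -> (T * K^o * D)%type -> (T * K^o * D)%type.
Hypothesis hbr1 : ext_bracket brL form xi brD rho tens br1.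
Variable br2 : (T * D)%type -> (T * D)%type -> (T * D)%type.
Hypothesis hbr2 : plain_bracket brL brD rho tens br2.

Local Notation G1 := (T * K^o * D)%type.
Local Notation G2 := (T * D)%type.

Definition inT (t : T) : G1 := ((t, 0), 0).
Definition inD (d : D) : G1 := ((0, 0), d).
Definition zc : G1 := ((0, 1), 0).
Definition lift (g : G2) : G1 := ((g.1, 0), g.2).
Definition quot (u : G1) : G2 := (u.1.1, u.2).

Ltac pair_eq := repeat (apply: injective_projections => /=).

Lemma two_neq0 : (2%:R : K) != 0.
Proof. by rewrite natf_neq0_pchar pnatE // inE. Qed.
Lemma three_neq0 : (3%:R : K) != 0.
Proof. by rewrite natf_neq0_pchar pnatE // inE. Qed.

Lemma tens_linl a : lin (tens^~ a). Proof. by case: hT => [[_ ?] _]. Qed.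
Lemma tens_linr x : lin (tens x). Proof. by case: hT => [[? _] _]. Qed.

Lemma lin_inT : lin inT.
Proof. by move=> c u v; pair_eq; rewrite ?scaler0 ?mulr0 ?addr0. Qed.
Lemma lin_lift : lin lift.
Proof. by move=> c u v; pair_eq; rewrite ?scaler0 ?mulr0 ?addr0. Qed.
Lemma lin_quot : lin quot.
Proof. by move=> c u v; pair_eq. Qed.
Lemma lin_inl : lin ((fun t : T => (t, 0)) : T -> G2).
Proof. by move=> c u v; pair_eq; rewrite ?scaler0 ?addr0. Qed.

Lemma lift_dec g : lift g = inT g.1 + inD g.2.
Proof. by pair_eq; rewrite ?addr0 ?add0r. Qed.
Lemma G2_dec (g : G2) : g = (g.1, 0) + (0, g.2).
Proof. by pair_eq; rewrite ?addr0 ?add0r. Qed.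
Lemma G1_dec (u : G1) : u = lift (quot u) + u.1.2 *: zc.
Proof. by pair_eq; rewrite ?scaler0 ?addr0 ?add0r //; exact: esym (mulr1 _). Qed.
Lemma quot_lift g : quot (lift g) = g.
Proof. by case: g. Qed.
Lemma quot_inT_zc s (c : K) : quot (inT s + c *: zc) = (s, 0).
Proof. by pair_eq; rewrite ?scaler0 ?addr0. Qed.

Lemma br1_linl v : lin (br1^~ v). Proof. by case: hbr1 => [[_ ?] _]. Qed.
Lemma br1_linr u : lin (br1 u). Proof. by case: hbr1 => [[? _] _]. Qed.
Lemma br2_linl v : lin (br2^~ v). Proof. by case: hbr2 => [[_ ?] _]. Qed.
Lemma br2_linr u : lin (br2 u). Proof. by case: hbr2 => [[? _] _]. Qed.

Lemma br1_zcl u : br1 zc u = 0.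
Proof. by case: hbr1 => _ [_ [_ [_ [_ h]]]]; case: (h u). Qed.
Lemma br1_zcr u : br1 u zc = 0.
Proof. by case: hbr1 => _ [_ [_ [_ [_ h]]]]; case: (h u). Qed.

Lemma br1_inT_inT x a y b : br1 (inT (tens x a)) (inT (tens y b)) =
  inT (tens (brL x y) (a * b)) + (form x y * xi a b) *: zc.
Proof.
case: hbr1 => _ [-> _].
by pair_eq; rewrite ?scaler0 ?addr0 ?add0r //; exact: esym (mulr1 _).
Qed.
Lemma br1_inD_inT d x a : br1 (inD d) (inT (tens x a)) = inT (tens x (rho d a)).
Proof. by case: hbr1 => _ [_ [h _]]; rewrite /inT /inD h. Qed.
Lemma br1_inT_inD d x a : br1 (inT (tens x a)) (inD d) = - inT (tens x (rho d a)).
Proof. by case: hbr1 => _ [_ [_ [h _]]]; rewrite /inT /inD h. Qed.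
Lemma br1_inD_inD d e : br1 (inD d) (inD e) = inD (brD d e).
Proof. by case: hbr1 => _ [_ [_ [_ [h _]]]]; rewrite /inD h. Qed.

Lemma quot_br1_inT_inT t t' : quot (br1 (inT t) (inT t')) = br2 (t, 0) (t', 0).
Proof.
apply: (tensor_ext hT (lin_comp lin_quot (lin_comp (br1_linr _) lin_inT))
                      (lin_comp (br2_linr _) lin_inl)) => y b /=.
apply: (tensor_ext hT (lin_comp lin_quot (lin_comp (br1_linl _) lin_inT))
                      (lin_comp (br2_linl _) lin_inl)) => x a /=.
by rewrite br1_inT_inT quot_inT_zc; case: hbr2 => _ [-> _].
Qed.

Lemma quot_br1_inT_inD t e : quot (br1 (inT t) (inD e)) = br2 (t, 0) (0, e).
Proof.
apply: (tensor_ext hT (lin_comp lin_quot (lin_comp (br1_linl _) lin_inT))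
                      (lin_comp (br2_linl _) lin_inl)) => x a /=.
by rewrite br1_inT_inD (linN lin_quot); case: hbr2 => _ [_ [_ [-> _]]].
Qed.

Lemma quot_br1_inD_inT d t : quot (br1 (inD d) (inT t)) = br2 (0, d) (t, 0).
Proof.
apply: (tensor_ext hT (lin_comp lin_quot (lin_comp (br1_linr _) lin_inT))
                      (lin_comp (br2_linr _) lin_inl)) => x a /=.
by rewrite br1_inD_inT; case: hbr2 => _ [_ [-> _]].
Qed.

Lemma quot_br1_inD_inD d e : quot (br1 (inD d) (inD e)) = br2 (0, d) (0, e).
Proof. by rewrite br1_inD_inD; case: hbr2 => _ [_ [_ [_ ->]]]. Qed.

Lemma quot_br1_lift g h : quot (br1 (lift g) (lift h)) = br2 g h.
Proof.
rewrite [in RHS](G2_dec g) [in RHS](G2_dec h) !lift_dec.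
rewrite (linD (br2_linl _)) !(linD (br2_linr _)).
rewrite (linD (br1_linl _)) !(linD (br1_linr _)) !(linD lin_quot).
by rewrite quot_br1_inT_inT quot_br1_inT_inD quot_br1_inD_inT quot_br1_inD_inD.
Qed.

Lemma quot_br1 u v : quot (br1 u v) = br2 (quot u) (quot v).
Proof.
rewrite -quot_br1_lift {1}(G1_dec u) (linD (br1_linl v)) (linZ (br1_linl v)).
rewrite br1_zcl scaler0 addr0 {1}(G1_dec v) (linD (br1_linr _)) (linZ (br1_linr _)).
by rewrite br1_zcr scaler0 addr0.
Qed.

Section Cocycle.
Variable phi : G1 -> G1 -> K.
Hypothesis hphi : Z2comm br1 phi.

Lemma phi_linl v : lin (phi^~ v : G1 -> K^o).
Proof. by apply: linK_lin; case: hphi => [[_ ?] _]. Qed.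
Lemma phi_linr u : lin (phi u : G1 -> K^o).
Proof. by apply: linK_lin; case: hphi => [[? _] _]. Qed.
Lemma phi_sym u v : phi u v = phi v u. Proof. by case: hphi => _ [-> _]. Qed.
Lemma phi_cocycle u v w : phi (br1 u v) w + phi (br1 w u) v + phi (br1 v w) u = 0.
Proof. by case: hphi => _ [_ ->]. Qed.
Lemma phi0l v : phi 0 v = 0. Proof. exact: lin0 (phi_linl v). Qed.

Lemma phi_inT_zc t : phi (inT t) zc = 0.
Proof.
have lin_f : lin ((fun t => phi (inT t) zc) : T -> K^o) := lin_comp (phi_linl zc) lin_inT.
apply: (tensor_ext hT lin_f (@lin_cst0 _ T K^o)) => x a /=.
apply: (perfect_lin_eq0 hperf (lin_comp lin_f (tens_linl a))) => {}x y.
have := phi_cocycle (inT (tens x a)) (inT (tens y 1)) zc.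
by rewrite br1_zcl br1_zcr !phi0l !addr0 br1_inT_inT HC1_1r // mulr0 scale0r addr0 mulr1.
Qed.

Lemma phi_zc_zc : phi zc zc = 0.
Proof.
have [x [y form_neq0]] := hform0; have [a [b xi_neq0]] := hxi0.
have := phi_cocycle (inT (tens x a)) (inT (tens y b)) zc.
rewrite br1_zcl br1_zcr !phi0l !addr0 br1_inT_inT (linD (phi_linl zc)) (linZ (phi_linl zc)).
by rewrite phi_inT_zc add0r => /eqP; rewrite !mulf_eq0 (negbTE form_neq0) (negbTE xi_neq0) => /eqP.
Qed.

Definition phiT x a y b := phi (inT (tens x a)) (inT (tens y b)).

Lemma phiT_linl a y b : lin ((fun x => phiT x a y b) : L -> K^o).
Proof. exact: lin_comp (phi_linl _) (lin_comp lin_inT (tens_linl a)). Qed.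
Lemma phiT_linr x a b : lin ((fun y => phiT x a y b) : L -> K^o).
Proof. exact: lin_comp (phi_linr _) (lin_comp lin_inT (tens_linl b)). Qed.
Lemma phiT_lina x y b : lin ((fun a => phiT x a y b) : A -> K^o).
Proof. exact: lin_comp (phi_linl _) (lin_comp lin_inT (tens_linr x)). Qed.
Lemma phiT_sym x a y b : phiT x a y b = phiT y b x a. Proof. exact: phi_sym. Qed.
Lemma phiT0 x y b : phiT x 0 y b = 0.
Proof. by rewrite /phiT (lin0 (tens_linr x)) (lin0 lin_inT) phi0l. Qed.

Lemma phi_br1_inT_inT x a y b v : phi (br1 (inT (tens x a)) (inT (tens y b))) v =
  phi (inT (tens (brL x y) (a * b))) v + form x y * xi a b * phi zc v.
Proof. by rewrite br1_inT_inT (linD (phi_linl v)) (linZ (phi_linl v)). Qed.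

Lemma phiT_cocycle x a y b w c :
  phiT (brL x y) (a * b) w c + phiT (brL w x) (c * a) y b + phiT (brL y w) (b * c) x a = 0.
Proof.
have := phi_cocycle (inT (tens x a)) (inT (tens y b)) (inT (tens w c)).
by rewrite !phi_br1_inT_inT !(phi_sym zc) !phi_inT_zc !mulr0 !addr0.
Qed.

(* The defect [phiT x a y b - phiT x (a * b) y 1] is an ad-symmetric form in
   [(x, y)] by two instances of the cocycle identity, hence vanishes. *)
Lemma phiT_mul x a y b : phiT x a y b = phiT x (a * b) y 1.
Proof.
pose p x y : K^o := phiT x a y b - phiT x (a * b) y 1.
suff p0 : forall x y, p x y = 0 by apply/eqP; rewrite -subr_eq0; apply/eqP; exact: p0.
apply: (adsym_form_eq0 hperf hL two_neq0).
- by move=> y0; apply: lin_sub; apply: phiT_linl.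
- by move=> x0; apply: lin_sub; apply: phiT_linr.
move=> w x0 y0; rewrite /p.
have h1 := phiT_cocycle x0 a y0 b w 1.
have h2 := phiT_cocycle x0 (a * b) y0 1 w 1.
rewrite !mulr1 !mul1r in h1 h2.
rewrite (phiT_sym (brL y0 w)) (phiT_sym (brL y0 w)) (lie_anti hL y0 w) in h1 h2.
rewrite !(linN (phiT_linr _ _ _)) in h1 h2.
apply/eqP; rewrite -subr_eq0; apply/eqP.
have regroup E P Q R S : P - Q - (R - S) = (E + P + - R) - (E + Q + - S) - (E - E) :> K
  by ring.
by rewrite (regroup (phiT (brL x0 y0) (a * b) w 1)) h1 h2 !subrr.
Qed.

Lemma phiT_cocycle1 c x y w :
  phiT (brL x y) c w 1 + phiT (brL w x) c y 1 + phiT (brL y w) c x 1 = 0.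
Proof.
have := phiT_cocycle x c y 1 w 1.
by rewrite !mulr1 !mul1r (phiT_mul (brL y w) 1 x c) mul1r.
Qed.

Section Derivation.
Variable d : D.

Lemma rho_mul a b : rho d (a * b) = rho d a * b + a * rho d b.
Proof. by case: hD => _ [_ [hder _]]; case: (hder d) => _ ->. Qed.

Lemma phi_cocycle_inT_inT_inD x a y b :
  phi (inT (tens (brL x y) (a * b))) (inD d) + form x y * xi a b * phi zc (inD d)
    + phiT x (rho d a) y b - phiT y (rho d b) x a = 0.
Proof.
have := phi_cocycle (inT (tens x a)) (inT (tens y b)) (inD d).
by rewrite phi_br1_inT_inT br1_inD_inT br1_inT_inD (linN (phi_linl _)).
Qed.

Lemma phi_inT_br_inD x y a :
  phi (inT (tens (brL x y) a)) (inD d) = - phiT x (rho d a) y 1.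
Proof.
have := phi_cocycle_inT_inT_inD x a y 1.
have rho1 : rho d 1 = 0 by apply: derivation1; case: hD => _ [_ [hder _]].
rewrite mulr1 HC1_1r // mulr0 mul0r addr0 rho1 phiT0 subr0 => /eqP.
by rewrite addr_eq0 => /eqP.
Qed.

Lemma form_xi_phi_zc_inD x y a b :
  form x y * xi a b * phi zc (inD d) = phiT x (a * rho d b) y 1 *+ 2.
Proof.
have := phi_cocycle_inT_inT_inD x a y b.
rewrite phi_inT_br_inD rho_mul (linD (phiT_lina _ _ _)) (phiT_mul x (rho d a) y b).
rewrite (phiT_sym y) (phiT_mul x a) => h.
by apply/eqP; rewrite -subr_eq0 -h; apply/eqP; ring.
Qed.

Lemma phi_zc_inD : phi zc (inD d) = 0.
Proof.
have [a [b xi_neq0]] := hxi0; set lam := phi zc (inD d).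
have form_br x y w : form (brL x y) w * xi a b * lam = 0.
  have f1 : form (brL w x) y = form (brL x y) w by rewrite hform_inv hform_sym.
  have f2 : form (brL y w) x = form (brL x y) w by rewrite hform_inv hform_sym hform_inv.
  have eA := form_xi_phi_zc_inD (brL x y) w a b.
  have eB := form_xi_phi_zc_inD (brL w x) y a b.
  have eC := form_xi_phi_zc_inD (brL y w) x a b.
  rewrite f1 in eB; rewrite f2 in eC.
  have : 3%:R * (form (brL x y) w * xi a b * lam) = 0.
    have -> : forall F : K, 3%:R * F = F + F + F by move=> *; ring.
    by rewrite {1}eA {1}eB eC -!mulrnDl phiT_cocycle1 mul0rn.
  by move/eqP; rewrite mulf_eq0 (negbTE three_neq0) => /eqP.
have [x [y form_neq0]] := hform0.
have f_lin : lin ((fun x => form x y * xi a b * lam) : L -> K^o).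
  have form_l : linK (form^~ y) by case: hform_bil.
  by move=> c u v; rewrite form_l !mulrDl -!mulrA.
have := perfect_lin_eq0 hperf f_lin (fun u v => form_br u v y) x.
by move/eqP; rewrite !mulf_eq0 (negbTE form_neq0) (negbTE xi_neq0) => /eqP.
Qed.

End Derivation.

Lemma phi_zc u : phi zc u = 0.
Proof.
rewrite (G1_dec u) lift_dec !(linD (phi_linr zc)) (linZ (phi_linr zc)).
by rewrite (phi_sym zc (inT _)) phi_inT_zc phi_zc_inD phi_zc_zc scaler0 !addr0.
Qed.

Lemma phi_quot u v : phi u v = phi (lift (quot u)) (lift (quot v)).
Proof.
rewrite {1}(G1_dec u) (linD (phi_linl v)) (linZ (phi_linl v)) phi_zc scaler0 addr0.
rewrite {1}(G1_dec v) (linD (phi_linr _)) (linZ (phi_linr _)) (phi_sym _ zc).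
by rewrite phi_zc scaler0 addr0.
Qed.

End Cocycle.

Definition restrict (phi : G1 -> G1 -> K) : G2 -> G2 -> K :=
  fun g h => phi (lift g) (lift h).
Definition inflate (chi : G2 -> G2 -> K) : G1 -> G1 -> K :=
  fun u v => chi (quot u) (quot v).

Lemma Z2comm_restrict phi : Z2comm br1 phi -> Z2comm br2 (restrict phi).
Proof.
move=> hphi; split; [split|split].
- by move=> g; apply: lin_comp (phi_linr hphi _) lin_lift.
- by move=> h; apply: lin_comp (phi_linl hphi _) lin_lift.
- by move=> g h; apply: phi_sym.
move=> g h k; have phi_quotl u v : phi u (lift v) = phi (lift (quot u)) (lift v).
  by rewrite (phi_quot hphi) quot_lift.
by rewrite /restrict -!quot_br1_lift -!phi_quotl; apply: phi_cocycle.
Qed.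

Lemma restrict_inj phi psi : Z2comm br1 phi -> Z2comm br1 psi ->
  restrict phi = restrict psi -> phi = psi.
Proof.
move=> hphi hpsi e; apply: functional_extensionality => u.
apply: functional_extensionality => v.
by rewrite (phi_quot hphi) (phi_quot hpsi); apply: (congr1 (fun F => F (quot u) (quot v)) e).
Qed.

Lemma Z2comm_inflate chi : Z2comm br2 chi -> Z2comm br1 (inflate chi).
Proof.
case=> [[chi_r chi_l] [chi_sym chi_coc]]; split; [split|split].
- by move=> u c v w; rewrite /inflate (linD lin_quot) (linZ lin_quot) chi_r.
- by move=> v c u w; rewrite /inflate (linD lin_quot) (linZ lin_quot) chi_l.
- by move=> u v; apply: chi_sym.
by move=> u v w; rewrite /inflate !quot_br1; apply: chi_coc.
Qed.

Lemma restrict_inflate chi : restrict (inflate chi) = chi.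
Proof.
apply: functional_extensionality => g; apply: functional_extensionality => h.
by rewrite /restrict /inflate !quot_lift.
Qed.

Lemma Z2comm_ext_iso : subspace_iso (Z2comm br1) (Z2comm br2).
Proof.
exists restrict; split; [exact: Z2comm_restrict | split; [by [] | split]].
- exact: restrict_inj.
by move=> chi hchi; exists (inflate chi); [exact: Z2comm_inflate | exact: restrict_inflate].
Qed.

End CentralExtension.

Theorem lemma5p4 (K : fieldType)
  (hchar2 : 2%N \notin [pchar K]) (hchar3 : 3%N \notin [pchar K])
  (L : lmodType K) (brL : L -> L -> L) (hL : is_lie brL) (hperf : perfect brL)
  (A : comAlgType K) (hfin : fin_dim L \/ fin_dim A)
  (D : lmodType K) (brD : D -> D -> D) (rho : D -> A -> A)
  (hD : lie_subalg_Der brD rho)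
  (form : L -> L -> K) (hform_bil : bilinK form)
  (hform_sym : forall x y, form x y = form y x)
  (hform_inv : invariant_form brL form) (hform0 : exists x y, form x y != 0)
  (xi : A -> A -> K) (hxi : HC1 xi) (hxi0 : exists a b, xi a b != 0)
  (T : lmodType K) (tens : L -> A -> T) (hT : is_tensor tens)
  (br1 : (T * K^o * D)%type -> (T * K^o * D)%type -> (T * K^o * D)%type)
  (hbr1 : ext_bracket brL form xi brD rho tens br1) (hbr1_lie : is_lie br1)
  (br2 : (T * D)%type -> (T * D)%type -> (T * D)%type)
  (hbr2 : plain_bracket brL brD rho tens br2) :
  subspace_iso (Z2comm br1) (Z2comm br2).
Proof.
exact: (Z2comm_ext_iso hchar2 hchar3 hL hperf hD hform_bil hform_sym hform_inv
  hform0 hxi hxi0 hT hbr1 hbr2).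
Qed.
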